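(* The relation $\{(\rho,\sigma,\pi):\sigma=[n],\ \rho=[r],\text{ and the part } r \text{ appears in }\pi\text{ exactly }n\text{ times}\}$ is $\Pi_3$-definable in $\mathbf Y^*=\langle\mathcal P,\le,[1]+[1]\rangle$.
   Context: $\mathcal P$ is the set of all integer partitions, including the empty partition; a partition is a nonincreasing finite sequence of positive integers (its parts). $[n]$ denotes the partition with a single part $n$. Young's lattice $\mathbf Y=\langle\mathcal P,\le\rangle$ has $(s_1,\dots,s_r)\le(n_1,\dots,n_t)$ iff $r\le t$ and $s_i\le n_i$ for all $i\le r$; $\mathbf Y^*$ is $\mathbf Y$ with a constant symbol for the partition $(1,1)$. A relation is $\Pi_n$-definable if it is defined by a first-order formula in the language $\{\le,(1,1)\}$ in prenex form with $n$ alternating quantifier blocks, the outermost universal, and a quantifier-free matrix. *)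

From mathcomp Require Import all_boot.
Set Implicit Arguments. Unset Strict Implicit. Unset Printing Implicit Defensive.

Definition is_partition (s : seq nat) : bool :=
  sorted geq s && all (fun x => 0 < x) s.

Definition partition := {s : seq nat | is_partition s}.

Definition yle_seq (s t : seq nat) : bool :=
  (size s <= size t) && all (fun i => nth 0 s i <= nth 0 t i) (iota 0 (size s)).

Definition yle (p q : partition) : Prop := yle_seq (sval p) (sval q).

(* The constant (1,1) = [1]+[1]. *)
Lemma is_partition_11 : is_partition [:: 1; 1]. Proof. by []. Qed.
Definition part11 : partition := exist _ [:: 1; 1] is_partition_11.

Inductive term : Type :=
| TVar of nat
| TC11.

Inductive qf : Type :=
| QTrue | QFalse
| QLe of term & term
| QEq of term & term
| QNot of qf
| QAnd of qf & qf
| QOr of qf & qf.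

Definition env := nat -> partition.

Definition eval_term (e : env) (t : term) : partition :=
  match t with TVar i => e i | TC11 => part11 end.

Fixpoint qf_sat (e : env) (f : qf) : Prop :=
  match f with
  | QTrue => True
  | QFalse => False
  | QLe a b => yle (eval_term e a) (eval_term e b)
  | QEq a b => eval_term e a = eval_term e b
  | QNot g => ~ qf_sat e g
  | QAnd g h => qf_sat e g /\ qf_sat e h
  | QOr g h => qf_sat e g \/ qf_sat e h
  end.

Definition upd (e : env) (v : nat) (p : partition) : env :=
  fun i => if i == v then p else e i.

Fixpoint forall_block (vs : seq nat) (P : env -> Prop) (e : env) : Prop :=
  match vs with
  | [::] => P e
  | v :: vs' => forall p : partition, forall_block vs' P (upd e v p)
  end.

Fixpoint exists_block (vs : seq nat) (P : env -> Prop) (e : env) : Prop :=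
  match vs with
  | [::] => P e
  | v :: vs' => exists p : partition, exists_block vs' P (upd e v p)
  end.

Fixpoint prenex_sat (univ : bool) (blocks : seq (seq nat)) (f : qf) (e : env)
  : Prop :=
  match blocks with
  | [::] => qf_sat e f
  | vs :: rest =>
      if univ then forall_block vs (prenex_sat false rest f) e
      else exists_block vs (prenex_sat true rest f) e
  end.

Definition Pi_definable3 (n : nat) (R : partition -> partition -> partition -> Prop)
  : Prop :=
  exists (blocks : seq (seq nat)) (f : qf),
    size blocks = n /\
    forall e : env, R (e 0) (e 1) (e 2) <-> prenex_sat true blocks f e.

Definition rel_3_11 (rho sigma pi : partition) : Prop :=
  exists n r : nat,
    sval sigma = [:: n] /\ sval rho = [:: r] /\ count_mem r (sval pi) = n.

From Pilot Require Import Defs.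
From mathcomp Require Import all_boot zify.
From Stdlib Require Import Classical.
Import Defs.
Set Implicit Arguments. Unset Strict Implicit. Unset Printing Implicit Defensive.

(* Let A and B be the numbers of parts of pi that are >= R and > R, so that the
   multiplicity of R is A - B.  Using (1,1) one defines the one-row and the
   one-column partitions and the first row of a partition.  Using covers and
   "the least partition below x but not below y" one defines from rho and pi
   the rectangles with A rows of length R and B+1 rows of length R+1 (obtained
   by removing, resp. adding, the box at the end of the last, resp. first, row
   of length R), hence the column of height A and the rectangle with B+1 rows
   of length n.  The staircases (m, ..., 2, 1) are definable as the partitions
   below which no interval of length two is a chain, and A = B + n iff the
   column and the rectangle lie below the same staircases. *)

Lemma geq_trans : transitive geq.
Proof. by move=> a b c /= ba cb; apply: leq_trans cb ba. Qed.

(* [part p i] is the i-th part of p (counting from 0), and 0 beyond its length. *)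
Definition part (p : partition) (i : nat) : nat := nth 0 (sval p) i.
Definition len (p : partition) : nat := size (sval p).

Lemma part_gt0 p i : (0 < part p i) = (i < len p).
Proof.
case: p => s s_part; rewrite /part /len /=; case/andP: s_part => _ s_pos.
case: (ltnP i (size s)) => [lt_is|le_si]; last by rewrite nth_default.
by apply: (allP s_pos); apply: mem_nth.
Qed.

Lemma part_len p i : len p <= i -> part p i = 0.
Proof. by move=> le_pi; apply/eqP; rewrite -leqn0 leqNgt part_gt0 -leqNgt. Qed.

Lemma part_mono p i j : i <= j -> part p j <= part p i.
Proof.
case: p => s s_part; rewrite /part /= => le_ij; case/andP: s_part => s_sorted _.
case: (ltnP j (size s)) => [lt_js|le_sj]; last by rewrite nth_default.
apply: (sorted_leq_nth geq_trans) => //; last exact: leq_ltn_trans lt_js.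
by move=> a /=.
Qed.

Lemma yle_partP p q : yle p q <-> forall i, part p i <= part q i.
Proof.
rewrite /yle /yle_seq; split.
  case/andP=> _ /allP le_pq i.
  case: (ltnP i (size (sval p))) => [lt_ip|le_pi]; first by apply: le_pq; rewrite mem_iota.
  by rewrite [part p i]part_len.
move=> le_pq; apply/andP; split; last by apply/allP => i _; apply: le_pq.
rewrite leqNgt; apply/negP => lt_qp.
by have := le_pq (len q); rewrite [part q _]part_len // leqNgt part_gt0 lt_qp.
Qed.

Lemma part_inj p q : (forall i, part p i = part q i) -> p = q.
Proof.
move=> eq_pq; apply: val_inj.
have le_len r s : (forall i, part r i = part s i) -> len r <= len s.
  by move=> eq_rs; rewrite leqNgt -part_gt0 eq_rs part_gt0 ltnn.
have eq_len : len p = len q.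
  by apply/eqP; rewrite eqn_leq !le_len // => i; rewrite eq_pq.
by apply: (eq_from_nth (x0 := 0) eq_len) => i _; apply: eq_pq.
Qed.

Lemma yle_antisym p q : yle p q -> yle q p -> p = q.
Proof.
move=> /yle_partP le_pq /yle_partP le_qp; apply: part_inj => i.
by apply/eqP; rewrite eqn_leq le_pq le_qp.
Qed.

Lemma not_yle p q : ~ yle p q -> exists i, part q i < part p i.
Proof.
move=> nle_pq; apply: NNPP => no_i; apply/nle_pq/yle_partP => i.
by rewrite leqNgt; apply/negP => lt_qp; apply: no_i; exists i.
Qed.

Lemma neq_part p q : p <> q -> exists i, part p i <> part q i.
Proof.
move=> neq_pq; apply: NNPP => no_i; apply/neq_pq/part_inj => i.
by apply: NNPP => neq_i; apply: no_i; exists i.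
Qed.

Definition nonincr (f : nat -> nat) : Prop := forall i, f i.+1 <= f i.

Lemma nth_filter_gt0 (s : seq nat) i :
  sorted geq s -> nth 0 [seq x <- s | 0 < x] i = nth 0 s i.
Proof.
elim: s i => [|x s IH] i //= s_sorted.
have /IH {}IH := path_sorted s_sorted.
case: (posnP x) => [x0|_]; last by case: i.
have s0 y : y \in s -> y = 0.
  move=> y_s; apply/eqP; rewrite -leqn0 -x0.
  exact: (allP (order_path_min geq_trans s_sorted)).
rewrite (@eq_in_filter _ _ pred0) ?filter_pred0 => [|y /s0 -> //].
case: i => [|i] /=; first by rewrite x0.
have [lt_is|le_si] := ltnP i (size s); last by rewrite nth_default.
by rewrite (s0 _ (mem_nth 0 lt_is)).
Qed.

Lemma sorted_map_iota f m n : nonincr f -> sorted geq (map f (iota m n)).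
Proof.
move=> f_nonincr; elim: n m => [|[|n] IH] m //=.
by rewrite f_nonincr; apply: (IH m.+1).
Qed.

Lemma shape_of_subproof f n : nonincr f ->
  is_partition [seq x <- map f (iota 0 n) | 0 < x].
Proof.
move=> f_nonincr; apply/andP; split; last exact: filter_all.
by apply: (sorted_filter geq_trans); apply: sorted_map_iota.
Qed.

Definition shape_of f n (f_nonincr : nonincr f) : partition :=
  exist is_partition _ (shape_of_subproof n f_nonincr).

Lemma part_shape_of f n (f_nonincr : nonincr f) :
  (forall i, n <= i -> f i = 0) -> forall i, part (shape_of n f_nonincr) i = f i.
Proof.
move=> f_supp i; rewrite /part /= nth_filter_gt0; last exact: sorted_map_iota.
have [lt_in|le_ni] := ltnP i n; first by rewrite (nth_map 0) ?size_iota ?nth_iota.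
by rewrite nth_default ?size_map ?size_iota // f_supp.
Qed.

Lemma rect_nonincr h w : nonincr (fun i => if i < h then w else 0).
Proof. by move=> i /=; case: ltnP => [/ltnW ->|]. Qed.

Definition rect h w : partition := shape_of h (rect_nonincr h w).

Lemma part_rect h w i : part (rect h w) i = if i < h then w else 0.
Proof. by rewrite part_shape_of // => j le_hj; rewrite ltnNge le_hj. Qed.

Lemma stair_nonincr m : nonincr (fun i => m - i).
Proof. by move=> i; apply: leq_sub2l. Qed.

Definition stair m : partition := shape_of m (stair_nonincr m).

Lemma part_stair m i : part (stair m) i = m - i.
Proof. by rewrite part_shape_of // => j le_mj; apply/eqP; rewrite subn_eq0. Qed.

(* [setpart p k v] replaces the k-th part of p by v; the value is clamped so
   that the result is always a partition, and it is exactly v whenever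
   part p k.+1 <= v <= part p k.-1. *)
Definition setpart_fun p k v i : nat :=
  if i == k then maxn (part p k.+1) (if k is k'.+1 then minn v (part p k') else v)
  else part p i.

Lemma setpart_nonincr p k v : nonincr (setpart_fun p k v).
Proof.
move=> i; rewrite /setpart_fun.
have := part_mono p (leqnSn i); have := part_mono p (leqnSn i.+1).
by case: (eqVneq i.+1 k) => [<-|_]; case: (eqVneq i) => [<-|_] /=; lia.
Qed.

Definition setpart p k v : partition := shape_of (len p).+1 (setpart_nonincr p k v).

Lemma part_setpart p k v :
  part p k.+1 <= v -> (0 < k -> v <= part p k.-1) ->
  forall i, part (setpart p k v) i = if i == k then v else part p i.
Proof.
move=> lo hi i; rewrite part_shape_of.
  by rewrite /setpart_fun; case: eqP => // _; case: k lo hi => [|k] /= lo hi; lia.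
move=> j lt_pj; rewrite /setpart_fun; case: eqP => [<-|_]; last by rewrite part_len // ltnW.
by case: j lt_pj => [|j] //= lt_pj; rewrite !part_len //; lia.
Qed.

Definition ylt p q : Prop := yle p q /\ p <> q.
Definition ycov y x : Prop := ylt y x /\ forall s, ~ (ylt y s /\ ylt s x).
Definition box_added y x i : Prop :=
  part x i = (part y i).+1 /\ forall j, j != i -> part x j = part y j.

(* Below any x > y there is a partition obtained from y by adding one box:
   add it in the first row where y and x differ. *)
Lemma add_box_below y x : ylt y x -> exists i z, box_added y z i /\ yle z x.
Proof.
case=> /yle_partP le_yx neq_yx.
have ex_i : exists i, part y i < part x i.
  by have [i] := neq_part neq_yx; exists i; have := le_yx i; lia.
have [i lt_i min_i] := ex_minnP ex_i.
have hi : 0 < i -> (part y i).+1 <= part y i.-1.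
  move=> i_gt0; have x_mono := part_mono x (leq_pred i).
  have := le_yx i.-1; have : ~~ (part y i.-1 < part x i.-1).
    by apply/negP => /min_i; lia.
  lia.
have lo : part y i.+1 <= (part y i).+1 by rewrite leqW ?part_mono.
have z_part := part_setpart lo hi.
exists i, (setpart y i (part y i).+1); split.
  by split=> [|j /negbTE j_i]; rewrite z_part ?eqxx ?j_i.
by apply/yle_partP => j; rewrite z_part; case: eqP => [->|].
Qed.

Lemma box_added_ylt y x i : box_added y x i -> ylt y x.
Proof.
case=> x_i x_j; split.
  by apply/yle_partP => j; case: (eqVneq j i) => [->|/x_j ->]; rewrite ?x_i.
by move=> eq_yx; move: x_i; rewrite eq_yx; lia.
Qed.

Lemma ycovP y x : ycov y x <-> exists i, box_added y x i.
Proof.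
split.
  case=> lt_yx no_between; have [i [z [add_z le_zx]]] := add_box_below lt_yx.
  exists i; suff <- : z = x by [].
  apply: NNPP => neq_zx; apply: (no_between z).
  by split; [exact: box_added_ylt add_z | split].
case=> i add_x; split; first exact: box_added_ylt add_x.
case: add_x => x_i x_j s [[/yle_partP le_ys neq_ys] [/yle_partP le_sx neq_sx]].
have s_j j : j != i -> part s j = part y j.
  by move=> /x_j x_j'; have := le_ys j; have := le_sx j; lia.
have := le_sx i; rewrite leq_eqVlt => /orP[/eqP s_i|lt_si].
  apply: neq_sx; apply: part_inj => j.
  by case: (eqVneq j i) => [-> //|ne_ji]; rewrite s_j // x_j.
apply: neq_ys; apply: part_inj => j; case: (eqVneq j i) => [->|/s_j //].
by apply/eqP; rewrite eqn_leq le_ys -ltnS -x_i.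
Qed.

Definition is_row p : Prop := ~ yle part11 p.
Definition is_col z : Prop := forall w, is_row w -> yle w z -> yle w part11.
Definition first_row r K : Prop := yle r K /\ forall w, is_row w -> yle w K -> yle w r.

Lemma part_11 i : part part11 i = (i < 2).
Proof. by case: i => [|[|i]] //; rewrite /part /= nth_nil. Qed.

Lemma len_rect h w : 0 < w -> len (rect h w) = h.
Proof.
move=> w_gt0; apply/eqP; rewrite eqn_leq leqNgt -part_gt0 part_rect ltnn /=.
by case: h => [|h] //; rewrite -part_gt0 part_rect ltnSn w_gt0.
Qed.

Lemma is_rowP p : is_row p <-> part p 1 = 0.
Proof.
split=> [row_p|p1 /yle_partP/(_ 1)]; last by rewrite p1 part_11.
apply/eqP; rewrite -leqn0 leqNgt; apply/negP => p1_gt0; apply/row_p/yle_partP.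
case=> [|[|i]]; rewrite part_11 //; apply: leq_trans p1_gt0 (part_mono p _) => //.
Qed.

Lemma row_rect p : is_row p -> p = rect 1 (part p 0).
Proof.
move/is_rowP=> p1; apply: part_inj => -[|i]; rewrite part_rect //=.
by apply/eqP; rewrite -leqn0 -p1 part_mono.
Qed.

Lemma is_row_rect w : is_row (rect 1 w).
Proof. by apply/is_rowP; rewrite part_rect. Qed.
Arguments is_row_rect : clear implicits.

Lemma yle_row p q : is_row p -> (yle p q <-> part p 0 <= part q 0).
Proof.
move=> /row_rect ->; rewrite part_rect; split=> [/yle_partP/(_ 0)|le_pq].
  by rewrite part_rect.
by apply/yle_partP => -[|i]; rewrite part_rect.
Qed.

Lemma yle_col h K : yle (rect h 1) K <-> h <= len K.
Proof.
split=> [/yle_partP le_hK|le_hK]; first by case: h le_hK => // h /(_ h);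
  rewrite part_rect ltnSn part_gt0.
apply/yle_partP => i; rewrite part_rect; case: ltnP => // lt_ih.
by rewrite part_gt0 (leq_trans lt_ih le_hK).
Qed.

Lemma is_colP z : is_col z <-> part z 0 <= 1.
Proof.
split=> [col_z|z0 w row_w /yle_partP le_wz].
  have le_z : yle (rect 1 (part z 0)) z.
    by apply/(yle_row _ (is_row_rect _)); rewrite part_rect.
  by have /yle_partP/(_ 0) := col_z _ (is_row_rect _) le_z; rewrite part_rect part_11.
by apply/(yle_row _ row_w); rewrite part_11; apply: leq_trans (le_wz 0) z0.
Qed.

Lemma col_rect z : is_col z -> z = rect (len z) 1.
Proof.
move/is_colP=> z0; apply: part_inj => i; rewrite part_rect -part_gt0.
by have := part_mono z (leq0n i); case: posnP; lia.
Qed.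

Lemma is_col_rect h : is_col (rect h 1).
Proof. by apply/is_colP; rewrite part_rect; case: ifP. Qed.
Arguments is_col_rect : clear implicits.

Lemma first_rowP r K : is_row r -> (first_row r K <-> part K 0 = part r 0).
Proof.
move=> row_r; split=> [[/yle_partP/(_ 0) le_rK below_r]|K0].
  have le_K : yle (rect 1 (part K 0)) K.
    by apply/(yle_row _ (is_row_rect _)); rewrite part_rect.
  have /(yle_row _ (is_row_rect _)) := below_r _ (is_row_rect _) le_K.
  by rewrite part_rect /=; lia.
split=> [|w row_w]; first by apply/(yle_row _ row_r); rewrite K0.
by rewrite !(yle_row _ row_w) K0.
Qed.

Definition next_row r Rp : Prop :=
  is_row Rp /\ ~ yle Rp r /\ forall z, is_row z -> yle z Rp -> z <> Rp -> yle z r.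

Lemma next_rowP r Rp : is_row r -> (next_row r Rp <-> Rp = rect 1 (part r 0).+1).
Proof.
move=> row_r; split=> [[row_Rp [nle_Rr below_r]]|->].
  rewrite (row_rect row_Rp); congr rect; apply/eqP; rewrite eqn_leq andbC.
  have -> /= : part r 0 < part Rp 0.
    by rewrite ltnNge; apply/negP => /(yle_row _ row_Rp).
  rewrite leqNgt; apply/negP => lt_Rp; have row1 := is_row_rect (part r 0).+1.
  have le1 : yle (rect 1 (part r 0).+1) Rp by rewrite (yle_row _ row1) part_rect ltnW.
  have ne1 : rect 1 (part r 0).+1 <> Rp.
    by move=> eq_Rp; move: lt_Rp; rewrite -eq_Rp part_rect ltnn.
  by have := below_r _ row1 le1 ne1; rewrite (yle_row _ row1) part_rect ltnn.
split; first exact: is_row_rect.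
split=> [|z row_z]; first by rewrite (yle_row _ (is_row_rect _)) part_rect /= ltnn.
rewrite !(yle_row _ row_z) part_rect /= leq_eqVlt => /orP[/eqP z0 ne_z|] //.
by case: ne_z; rewrite (row_rect row_z) z0.
Qed.

Definition min_outside K x y : Prop :=
  yle K x /\ ~ yle K y /\ forall z, yle z x -> ~ yle z y -> yle K z.

Lemma min_outsideP K x y i :
  box_added y x i -> (min_outside K x y <-> K = rect i.+1 (part x i)).
Proof.
case=> x_i x_j.
have min_rect : min_outside (rect i.+1 (part x i)) x y.
  split; first by apply/yle_partP => j; rewrite part_rect; case: ltnP => // ?; exact: part_mono.
  split; first by move/yle_partP/(_ i); rewrite part_rect ltnSn x_i ltnn.
  move=> z /yle_partP le_zx /not_yle [j lt_yz].
  have eq_ji : j = i by apply/eqP/contraT => /x_j x_j'; have := le_zx j; lia.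
  subst j.
  apply/yle_partP => k; rewrite part_rect; case: ltnP => // lt_ki.
  by have := part_mono z (lt_ki : k <= i); have := le_zx i; rewrite x_i; lia.
split=> [min_K|->] //; case: min_K min_rect => [le_Kx [nle_Ky min_K]] [le_x [nle_y min_x]].
by apply: yle_antisym; [apply: min_K | apply: min_x].
Qed.

Definition nparts_ge (p : partition) (k : nat) : nat := count (fun x => k <= x) (sval p).

Lemma geq_nth_count (s : seq nat) k i : sorted geq s -> 0 < k ->
  (k <= nth 0 s i) = (i < count (fun x => k <= x) s).
Proof.
move=> + k_gt0; elim: s i => [|x s IH] i s_sorted /=.
  by rewrite nth_nil leqNgt k_gt0.
have {}IH := IH _ (path_sorted s_sorted).
case: (leqP k x) => [le_kx|lt_xk]; first by case: i.
have s_lt y : y \in s -> y < k.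
  by move=> y_s; apply: leq_ltn_trans lt_xk; apply: (allP (order_path_min geq_trans s_sorted)).
rewrite (@eq_in_count _ _ pred0) ?count_pred0 => [|y /s_lt]; last by rewrite ltnNge => /negbTE.
case: i => [|i] /=; first by rewrite leqNgt lt_xk.
have [lt_is|le_si] := ltnP i (size s); last by rewrite nth_default // leqNgt k_gt0.
by rewrite leqNgt s_lt ?mem_nth.
Qed.

Lemma nparts_geP p k i : 0 < k -> (k <= part p i) = (i < nparts_ge p k).
Proof.
case: p => s s_part; rewrite /part /nparts_ge /=.
by case/andP: s_part => s_sorted _; apply: geq_nth_count.
Qed.

Lemma part_eqE p R i :
  0 < R -> (part p i == R) = (nparts_ge p R.+1 <= i < nparts_ge p R).
Proof.
move=> R_gt0; rewrite eqn_leq andbC [part p i <= R]leqNgt !nparts_geP //.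
by rewrite -leqNgt andbC.
Qed.

Lemma count_mem_nparts p r : count_mem r (sval p) = nparts_ge p r - nparts_ge p r.+1.
Proof.
rewrite /nparts_ge; elim: (sval p) => [|x s IH] //=.
have : count (fun y => r.+1 <= y) s <= count (fun y => r <= y) s.
  by apply: sub_count => y /= /ltnW.
by rewrite IH; case: (ltngtP r x) => /=; lia.
Qed.

Definition box_rect lo hi row K : Prop :=
  ycov lo hi /\ min_outside K hi lo /\ first_row row K.

(* Let r = (R).  A box can be removed from pi so that the corresponding
   rectangle has width R exactly when R > 0 is a part of pi, and the box is
   then the last one of the last row of length R: the rectangle has height
   nparts_ge pi R. *)
Lemma box_rect_removeP pi r d KA : is_row r -> box_rect d pi r KA ->
  [/\ 0 < part r 0, nparts_ge pi (part r 0).+1 < nparts_ge pi (part r 0)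
    & KA = rect (nparts_ge pi (part r 0)) (part r 0)].
Proof.
move=> row_r [/ycovP [i box_i] [/(min_outsideP _ box_i) -> /(first_rowP _ row_r)]].
rewrite part_rect /= => pi_i; case: box_i => d_i d_j.
have R_gt0 : 0 < part r 0 by rewrite -pi_i d_i.
have pi_Si : part pi i.+1 < part r 0.
  by rewrite d_j ?(gtn_eqF (ltnSn i)) // -pi_i d_i ltnS part_mono.
have := part_eqE pi i R_gt0; rewrite pi_i eqxx => /esym/andP[le_Bi lt_iA].
have eq_A : nparts_ge pi (part r 0) = i.+1.
  by apply/eqP; rewrite eqn_leq lt_iA andbT leqNgt -nparts_geP // -ltnNge.
by rewrite eq_A; split=> //; rewrite ltnS le_Bi.
Qed.

Lemma box_rect_remove_exists pi r : is_row r -> 0 < part r 0 ->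
  nparts_ge pi (part r 0).+1 < nparts_ge pi (part r 0) ->
  exists d, box_rect d pi r (rect (nparts_ge pi (part r 0)) (part r 0)).
Proof.
move=> row_r R_gt0 lt_BA; set R := part r 0 in R_gt0 lt_BA *.
set A := nparts_ge pi R in lt_BA *; have A_gt0 : 0 < A by apply: leq_ltn_trans lt_BA.
have pi_last : part pi A.-1 = R.
  by apply/eqP; rewrite part_eqE // prednK // leqnn andbT -ltnS prednK.
have pi_A : part pi A < R by rewrite ltnNge nparts_geP // ltnn.
have lo : part pi A.-1.+1 <= R.-1 by rewrite prednK // -ltnS prednK.
have hi : 0 < A.-1 -> R.-1 <= part pi A.-1.-1.
  by rewrite -pi_last => _; apply: leq_trans (leq_pred _) (part_mono _ (leq_pred _)).
have d_part := part_setpart lo hi.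
have box : box_added (setpart pi A.-1 R.-1) pi A.-1.
  by split=> [|j /negbTE j_A]; rewrite d_part ?eqxx ?j_A // pi_last prednK.
exists (setpart pi A.-1 R.-1); split; first by apply/ycovP; exists A.-1.
split; first by apply/(min_outsideP _ box); rewrite pi_last prednK.
by apply/(first_rowP _ row_r); rewrite part_rect A_gt0.
Qed.

(* Dually, when a box is added to pi so that the rectangle has width R+1, the
   box goes to the end of the first row of length R, and the rectangle has
   height nparts_ge pi R.+1 plus one. *)
Lemma box_rect_addP pi R c KB :
  box_rect pi c (rect 1 R.+1) KB -> KB = rect (nparts_ge pi R.+1).+1 R.+1.
Proof.
move=> [/ycovP [i box_i] [/(min_outsideP _ box_i) ->]].
move/(first_rowP _ (is_row_rect _)); rewrite !part_rect /= => c_i.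
case: box_i => c_i' c_j; have pi_i : part pi i = R by move: c_i'; rewrite c_i => -[].
suff -> : nparts_ge pi R.+1 = i by rewrite c_i.
apply/eqP; rewrite eqn_leq leqNgt -nparts_geP // pi_i ltnn /=.
case: {c_i' pi_i} i c_i c_j => [|i] // c_Si c_j.
by rewrite -nparts_geP // -(c_j i) ?neq_ltn ?ltnSn // -c_Si part_mono.
Qed.

Lemma box_rect_add_exists pi R : 0 < R -> nparts_ge pi R.+1 < nparts_ge pi R ->
  exists c, box_rect pi c (rect 1 R.+1) (rect (nparts_ge pi R.+1).+1 R.+1).
Proof.
move=> R_gt0 lt_BA; set B := nparts_ge pi R.+1 in lt_BA *.
have pi_B : part pi B = R by apply/eqP; rewrite part_eqE // leqnn.
have lo : part pi B.+1 <= R.+1 by rewrite -pi_B leqW // part_mono.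
have hi : 0 < B -> R.+1 <= part pi B.-1 by move=> B_gt0; rewrite nparts_geP // prednK.
have c_part := part_setpart lo hi.
have box : box_added pi (setpart pi B R.+1) B.
  by split=> [|j /negbTE j_B]; rewrite c_part ?eqxx ?j_B ?pi_B.
exists (setpart pi B R.+1); split; first by apply/ycovP; exists B.
split; first by apply/(min_outsideP _ box); rewrite c_part eqxx.
by apply/(first_rowP _ (is_row_rect _)); rewrite !part_rect.
Qed.

Definition column_below CA K : Prop :=
  is_col CA /\ yle CA K /\ forall z, is_col z -> yle z K -> yle z CA.

Lemma column_belowP CA K : column_below CA K <-> CA = rect (len K) 1.
Proof.
split=> [[col_CA [le_CA max_CA]]|->].
  have le_K := max_CA _ (is_col_rect (len K)) (proj2 (yle_col _ _) (leqnn _)).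
  rewrite (col_rect col_CA) in le_CA le_K *; move: le_CA le_K.
  by rewrite !yle_col len_rect // => le1 le2; congr rect; apply/eqP; rewrite eqn_leq le1.
split; first exact: is_col_rect.
split=> [|z /col_rect ->]; first exact/yle_col.
by rewrite !yle_col len_rect.
Qed.

(* The partitions strictly below K are directed: K has at most one lower
   cover.  Among nonempty partitions these are exactly the rectangles. *)
Definition join_irreducible K : Prop :=
  forall u v, ylt u K -> ylt v K -> exists t, [/\ yle u t, yle v t & ylt t K].

Definition drop_box K k : partition := setpart K k (part K k).-1.

Lemma part_drop_box K k : part K k.+1 < part K k ->
  forall i, part (drop_box K k) i = if i == k then (part K k).-1 else part K i.
Proof.
move=> lt_k; apply: part_setpart; first by rewrite -ltnS prednK // (leq_ltn_trans _ lt_k).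
by move=> _; apply: leq_trans (leq_pred _) (part_mono _ (leq_pred _)).
Qed.

Lemma drop_box_ylt K k : part K k.+1 < part K k -> ylt (drop_box K k) K.
Proof.
move=> lt_k; have K_k : 0 < part K k by apply: leq_ltn_trans lt_k.
split; first by apply/yle_partP => i; rewrite part_drop_box //; case: eqP => // ->; apply: leq_pred.
by move/(congr1 (part^~ k)); rewrite part_drop_box // eqxx; lia.
Qed.

Lemma join_irreducible_rect h w : join_irreducible (rect h w).
Proof.
move=> u v lt_u lt_v.
have [hw0|] := boolP ((h == 0) || (w == 0)).
  case: lt_u => /yle_partP le_u []; apply: part_inj => i; have := le_u i.
  by rewrite !part_rect; case/orP: hw0 => /eqP->; rewrite ?ltn0 ?if_same; lia.
rewrite negb_or -!lt0n => /andP[h_gt0 w_gt0].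
have corner : part (rect h w) h.-1.+1 < part (rect h w) h.-1.
  by rewrite !part_rect ltn_predL h_gt0 prednK // ltnn.
have below t : ylt t (rect h w) -> yle t (drop_box (rect h w) h.-1).
  case=> /yle_partP le_t ne_t; apply/yle_partP => i.
  rewrite part_drop_box //; case: eqP => [->|_]; last exact: le_t.
  rewrite part_rect ltn_predL h_gt0 leqNgt; apply/negP => lt_t.
  apply: ne_t; apply: part_inj => j; have := le_t j; rewrite part_rect.
  case: ltnP => [lt_jh|_]; last lia.
  by have := part_mono t (_ : j <= h.-1); rewrite -ltnS prednK // => /(_ lt_jh); lia.
exists (drop_box (rect h w) h.-1); split; [exact: below | exact: below | exact: drop_box_ylt].
Qed.

(* A partition with two removable corners is not join-irreducible: any upper
   bound of the two partitions obtained by removing either corner is K itself. *)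
Lemma two_corners K j k : part K j.+1 < part K j -> part K k.+1 < part K k ->
  j != k -> ~ join_irreducible K.
Proof.
move=> corner_j corner_k ne_jk JI_K.
have [t [/yle_partP le_jt /yle_partP le_kt [le_tK ne_tK]]] :=
  JI_K _ _ (drop_box_ylt corner_j) (drop_box_ylt corner_k).
apply/ne_tK/(yle_antisym le_tK)/yle_partP => i.
have := le_jt i; have := le_kt i; rewrite !part_drop_box //.
by case: (eqVneq i j) => [->|_ _ //]; rewrite (negbTE ne_jk).
Qed.

Lemma join_irreducible_rows K :
  join_irreducible K -> forall i, i < len K -> part K i = part K 0.
Proof.
move=> JI_K i lt_iL; have K0_gt0 : 0 < part K 0 by rewrite part_gt0 (leq_ltn_trans _ lt_iL).
set A := nparts_ge K (part K 0).
have A_gt0 : 0 < A by rewrite -nparts_geP.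
have K_A : part K A.-1 = part K 0.
  by apply/eqP; rewrite eqn_leq part_mono //= nparts_geP // prednK.
have corner_A : part K A.-1.+1 < part K A.-1.
  by rewrite prednK // K_A ltnNge nparts_geP // ltnn.
have L_gt0 : 0 < len K by apply: leq_ltn_trans lt_iL.
have corner_L : part K (len K).-1.+1 < part K (len K).-1.
  by rewrite prednK // part_len // part_gt0 ltn_predL.
have eq_AL : A.-1 = (len K).-1 by apply/eqP/negP => /negP/(two_corners corner_A corner_L).
apply/eqP; rewrite eqn_leq part_mono //= nparts_geP //.
by rewrite -/A -(prednK A_gt0) eq_AL prednK.
Qed.

Definition rect_of_height s KB RB : Prop :=
  [/\ first_row s RB, forall z, is_col z -> (yle z RB <-> yle z KB) & join_irreducible RB].

Lemma rect_of_heightP s KB RB : is_row s -> 0 < part s 0 -> 0 < len KB ->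
  (rect_of_height s KB RB <-> RB = rect (len KB) (part s 0)).
Proof.
move=> row_s s_gt0 KB_gt0; split=> [[/(first_rowP _ row_s) RB0 same_cols JI_RB]|->].
  have eq_len : len RB = len KB.
    have := same_cols _ (is_col_rect (len RB)); have := same_cols _ (is_col_rect (len KB)).
    rewrite !yle_col => -[_ le_KR] [le_RK _].
    by apply/eqP; rewrite eqn_leq le_RK ?le_KR.
  apply: part_inj => i; rewrite part_rect -eq_len -RB0; case: ltnP => [|le_Ri].
    exact: join_irreducible_rows.
  exact: part_len.
split; last exact: join_irreducible_rect.
  by apply/(first_rowP _ row_s); rewrite part_rect KB_gt0.
by move=> z /col_rect ->; rewrite !yle_col len_rect.
Qed.

(* x is staircase-like when no interval [w, x] of length two is a chain: for
   all w < y < x covering each other there is a fourth point in between. *)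
Definition staircase x : Prop :=
  forall y w, ycov w y -> ycov y x ->
    exists v, [/\ yle w v, yle v x & [/\ v <> w, v <> x & v <> y]].

Lemma chain_not_staircase x y w : ycov w y -> ycov y x ->
  (forall v, yle w v -> yle v x -> [\/ v = w, v = y | v = x]) -> ~ staircase x.
Proof.
move=> cov_wy cov_yx chain stair_x.
have [v [le_wv le_vx [ne_vw ne_vx ne_vy]]] := stair_x _ _ cov_wy cov_yx.
by case: (chain v le_wv le_vx).
Qed.

Lemma part_between w v x i : yle w v -> yle v x -> part w i = part x i -> part v i = part x i.
Proof. by move=> /yle_partP/(_ i) le_wv /yle_partP/(_ i) le_vx; lia. Qed.

Lemma drop_box_cov K k : part K k.+1 < part K k -> ycov (drop_box K k) K.
Proof.
move=> corner; apply/ycovP; exists k.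
split=> [|j /negbTE j_k]; rewrite part_drop_box // ?j_k // eqxx prednK //.
exact: leq_ltn_trans corner.
Qed.

Lemma staircase_step x i : staircase x -> part x i <= (part x i.+1).+1.
Proof.
move=> stair_x; rewrite leqNgt; apply/negP => long_i.
have corner1 : part x i.+1 < part x i by apply: ltnW.
have y_part := part_drop_box corner1; have cov_yx := drop_box_cov corner1.
set y := drop_box x i in y_part cov_yx.
have corner2 : part y i.+1 < part y i by rewrite !y_part eqxx (gtn_eqF (ltnSn i)); lia.
have w_part := part_drop_box corner2; have cov_wy := drop_box_cov corner2.
set w := drop_box y i in w_part cov_wy.
apply: (chain_not_staircase cov_wy cov_yx) stair_x => v le_wv le_vx.
have v_j j : j != i -> part v j = part x j.
  by move=> /negbTE j_i; apply: part_between le_wv le_vx _; rewrite w_part !y_part j_i.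
move: (le_wv) (le_vx) => /yle_partP/(_ i) le_wi /yle_partP/(_ i) le_vi.
rewrite w_part !y_part eqxx in le_wi.
have [eq_w|[eq_y|eq_x]] : part v i = (part x i).-2 \/ part v i = (part x i).-1 \/
    part v i = part x i by lia.
- apply: Or31; apply: part_inj => j; rewrite w_part !y_part.
  by case: (eqVneq j i) => [->|/v_j //]; rewrite eqxx eq_w.
- apply: Or32; apply: part_inj => j; rewrite y_part.
  by case: (eqVneq j i) => [->|/v_j //]; rewrite eq_y.
- by apply: Or33; apply: part_inj => j; case: (eqVneq j i) => [->|/v_j].
Qed.

Lemma staircase_corner x i :
  staircase x -> part x i.+2 < part x i.+1 -> part x i.+1 < part x i.
Proof.
move=> stair_x corner1; rewrite ltn_neqAle part_mono // andbT; apply/eqP => eq_x.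
have y_part := part_drop_box corner1; have cov_yx := drop_box_cov corner1.
set y := drop_box x i.+1 in y_part cov_yx.
have ne_iS : (i == i.+1) = false by rewrite (ltn_eqF (ltnSn i)).
have ne_Si : (i.+1 == i) = false by rewrite (gtn_eqF (ltnSn i)).
have corner2 : part y i.+1 < part y i.
  by rewrite !y_part eqxx ne_iS -eq_x prednK //; apply: leq_ltn_trans corner1.
have w_part := part_drop_box corner2; have cov_wy := drop_box_cov corner2.
set w := drop_box y i in w_part cov_wy.
apply: (chain_not_staircase cov_wy cov_yx) stair_x => v le_wv le_vx.
have v_j j : j != i -> j != i.+1 -> part v j = part x j.
  move=> /negbTE j_i /negbTE j_Si; apply: part_between le_wv le_vx _.
  by rewrite w_part !y_part j_i j_Si.
have v_eq p : part p i = part v i -> part p i.+1 = part v i.+1 ->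
    (forall j, j != i -> j != i.+1 -> part p j = part x j) -> v = p.
  move=> p_i p_Si p_j; apply: part_inj => j.
  case: (eqVneq j i) => [->|j_i]; first by rewrite p_i.
  by case: (eqVneq j i.+1) => [->|j_Si]; rewrite ?p_Si // p_j ?v_j.
move: (le_wv) (le_vx) => /yle_partP w_v /yle_partP v_x.
have := w_v i; have := w_v i.+1; have := v_x i; have := v_x i.+1.
have := part_mono v (leqnSn i); rewrite !w_part !y_part eqxx ne_iS ne_Si -eq_x.
move=> v_mono le_vSi le_vi le_wSi le_wi.
have [v_i|v_i] : part v i = (part x i.+1).-1 \/ part v i = part x i.+1 by lia.
  apply/Or31/v_eq; rewrite ?w_part ?y_part ?eqxx ?ne_iS ?ne_Si ?v_i -?eq_x //; first lia.
  by move=> j /negbTE j_i /negbTE j_Si; rewrite w_part !y_part j_i j_Si.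
have [v_Si|v_Si] : part v i.+1 = (part x i.+1).-1 \/ part v i.+1 = part x i.+1 by lia.
  apply/Or32/v_eq; rewrite ?y_part ?eqxx ?ne_iS ?v_i ?v_Si -?eq_x //.
  by move=> j _ /negbTE j_Si; rewrite y_part j_Si.
by apply/Or33/v_eq; rewrite ?v_i ?v_Si -?eq_x.
Qed.

Lemma stair_of_staircase x : staircase x -> x = stair (len x).
Proof.
move=> stair_x; set L := len x.
have top t : t <= L -> part x (L - t) = t.
  elim/ltn_ind: t => -[|t] IH le_tL; first by rewrite subn0 part_len.
  have eq_next : part x (L - t.+1).+1 = t.
    by rewrite (_ : (L - t.+1).+1 = L - t) ?IH //; lia.
  have corner : part x (L - t.+1).+1 < part x (L - t.+1).
    case: t IH le_tL eq_next => [|t] IH le_tL eq_next.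
      by rewrite eq_next part_gt0; lia.
    apply: staircase_corner => //; rewrite eq_next.
    by rewrite (_ : (L - t.+2).+2 = L - t) ?IH //; lia.
  by have := staircase_step (L - t.+1) stair_x; rewrite eq_next in corner *; lia.
apply: part_inj => i; rewrite part_stair; case: (leqP i L) => [le_iL|lt_Li].
  by rewrite -{1}(subKn le_iL) top ?leq_subr.
by rewrite part_len ?(ltnW lt_Li) //; apply/esym/eqP; rewrite subn_eq0 ltnW.
Qed.

Lemma staircase_stair m : staircase (stair m).
Proof.
move=> y w /ycovP [k [y_k y_j]] /ycovP [i [x_i x_j]]; rewrite part_stair in x_i.
have ne_ki : k != i.
  apply/eqP => eq_ki; subst k; have := part_mono w (leqnSn i).
  rewrite -(y_j i.+1) ?(gtn_eqF (ltnSn i)) // -(x_j i.+1) ?(gtn_eqF (ltnSn i)) //.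
  by rewrite part_stair; lia.
have y_k' : part y k = m - k by rewrite -(x_j k ne_ki) part_stair.
have corner : part (stair m) k.+1 < part (stair m) k by rewrite !part_stair; lia.
have v_part := part_drop_box corner.
exists (drop_box (stair m) k); split; last split.
- apply/yle_partP => j; rewrite v_part !part_stair.
  case: (eqVneq j k) => [->|j_k]; first by lia.
  rewrite -(y_j j j_k); case: (eqVneq j i) => [->|j_i]; first by lia.
  by rewrite -(x_j j j_i) part_stair.
- by case: (drop_box_ylt corner).
- have y_i : part y i = part w i by rewrite y_j // eq_sym.
  by move/(congr1 (part^~ i)); rewrite v_part eq_sym (negbTE ne_ki) !part_stair; lia.
- by case: (drop_box_ylt corner).
- by move/(congr1 (part^~ k)); rewrite v_part eqxx !part_stair; lia.
Qed.
Arguments staircase_stair : clear implicits.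

Lemma yle_rect_stair h w m :
  0 < h -> 0 < w -> (yle (rect h w) (stair m) <-> h.-1 + w <= m).
Proof.
move=> h_gt0 w_gt0; split=> [/yle_partP/(_ h.-1)|le_m].
  by rewrite part_rect part_stair ltn_predL h_gt0; lia.
by apply/yle_partP => i; rewrite part_rect part_stair; case: ltnP => // ?; lia.
Qed.

(* The relation of the theorem, expressed through the notions defined above:
   for r = (R) and s = (n), with A = nparts_ge pi R and B = nparts_ge pi R.+1,
   the column of height A and the B+1 by n rectangle lie below the same
   staircases, i.e. A = B + n. *)
Definition shape_condition (r s pi : partition) : Prop :=
  (forall Rp d KA c KB CA RB x,
     next_row r Rp -> box_rect d pi r KA -> box_rect pi c Rp KB ->
     column_below CA KA -> rect_of_height s KB RB -> staircase x ->
     (yle CA x <-> yle RB x)) /\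
  (is_row s /\ is_row r /\ (exists a, ~ yle s a) /\ exists d KA, box_rect d pi r KA).

Lemma row_seq p : is_row p -> 0 < part p 0 -> sval p = [:: part p 0].
Proof.
move=> /is_rowP p1 p0; have : len p <= 1 by rewrite leqNgt -part_gt0 p1.
by move: p0 p1; rewrite /part /len; case: (sval p) => [|a [|b l]].
Qed.

Lemma seq_row p n : sval p = [:: n] -> [/\ is_row p, part p 0 = n & 0 < n].
Proof.
move=> p_n; have n_gt0 : 0 < n by have := part_gt0 p 0; rewrite /part /len p_n.
by split=> //; [apply/is_rowP | ]; rewrite /part p_n.
Qed.

Lemma nonemptyP p : (exists a, ~ yle p a) <-> 0 < part p 0.
Proof.
split=> [[a nle_pa]|p0]; last first.
  by exists (rect 0 0) => /yle_partP/(_ 0); rewrite part_rect ltnn /=; lia.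
rewrite lt0n; apply/eqP => p0; apply/nle_pa/yle_partP => i.
by have := part_mono p (leq0n i); rewrite p0 leqn0 => /eqP ->.
Qed.

Lemma shape_condition_of_rel r s pi : rel_3_11 r s pi -> shape_condition r s pi.
Proof.
case=> n [R [/seq_row [row_s s0 n_gt0] [/seq_row [row_r r0 R_gt0] count_R]]].
rewrite count_mem_nparts in count_R.
have lt_BA : nparts_ge pi R.+1 < nparts_ge pi R by lia.
split; last first.
  do 2!split=> //; split; first by apply/nonemptyP; rewrite s0.
  have r_gt0 : 0 < part r 0 by rewrite r0.
  have lt_r : nparts_ge pi (part r 0).+1 < nparts_ge pi (part r 0) by rewrite r0.
  have [d lb] := box_rect_remove_exists row_r r_gt0 lt_r.
  by exists d; eexists; exact: lb.
move=> Rp d KA c KB CA RB x /(next_rowP _ row_r) -> /(box_rect_removeP row_r).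
rewrite r0 => -[_ _ ->] /box_rect_addP -> /column_belowP -> /(rect_of_heightP _ row_s).
rewrite s0 !len_rect // => /(_ n_gt0 isT) -> /stair_of_staircase ->.
by rewrite !yle_rect_stair //; lia.
Qed.

Lemma rel_of_shape_condition r s pi : shape_condition r s pi -> rel_3_11 r s pi.
Proof.
case=> same_stairs [row_s [row_r [/nonemptyP n_gt0 [d [KA lb]]]]].
have [R_gt0 lt_BA KA_rect] := box_rect_removeP row_r lb.
set R := part r 0 in R_gt0 lt_BA KA_rect; set n := part s 0 in n_gt0.
set A := nparts_ge pi R in lt_BA KA_rect; set B := nparts_ge pi R.+1 in lt_BA.
have [c ub] := box_rect_add_exists R_gt0 lt_BA.
have nr : next_row r (rect 1 R.+1) by apply/(next_rowP _ row_r).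
have cb : column_below (rect A 1) KA by apply/column_belowP; rewrite KA_rect len_rect.
have rh : rect_of_height s (rect B.+1 R.+1) (rect B.+1 n).
  by apply/(rect_of_heightP _ row_s n_gt0); rewrite len_rect.
have eq_A : A = B + n.
  have A_gt0 : 0 < A by apply: leq_ltn_trans lt_BA.
  have same m : A <= m <-> B + n <= m.
    by have := same_stairs _ _ _ _ _ _ _ _ nr lb ub cb rh (staircase_stair m);
      rewrite !yle_rect_stair //; lia.
  by apply/eqP; rewrite eqn_leq; apply/andP; split; [apply/same | apply/same].
exists n, R; split; first exact: row_seq.
by split; [exact: row_seq | rewrite count_mem_nparts -/A -/B eq_A; lia].
Qed.

Lemma rel_3_11P r s pi : rel_3_11 r s pi <-> shape_condition r s pi.
Proof. by split; [exact: shape_condition_of_rel | exact: rel_of_shape_condition]. Qed.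

Definition Le a b : qf := QLe (TVar a) (TVar b).
Definition Lt a b : qf := QAnd (Le a b) (QNot (QEq (TVar a) (TVar b))).
Definition Imp f g : qf := QOr (QNot f) g.
Definition Row t : qf := QNot (QLe TC11 (TVar t)).
Definition Below11 t : qf := QLe (TVar t) TC11.
Definition NotCol z w : qf := QAnd (Row w) (QAnd (Le w z) (QNot (Below11 w))).

Lemma or_notP (A B : Prop) : ~ A \/ B <-> (A -> B).
Proof. by split=> [[nA|b] a|AB] //; case: (classic A) => [/AB|]; [right|left]. Qed.

(* Each notion defined above is the universal closure (next_row, box_rect) or
   the forall-exists closure (column_below, rect_of_height, staircase) of a
   quantifier-free formula. *)
Definition next_row_qf r Rp z : qf :=
  QAnd (Row Rp) (QAnd (QNot (Le Rp r))
    (Imp (QAnd (Row z) (QAnd (Le z Rp) (QNot (QEq (TVar z) (TVar Rp))))) (Le z r))).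

Definition next_row_mat r Rp z : Prop :=
  is_row Rp /\ ~ yle Rp r /\ (~ (is_row z /\ yle z Rp /\ z <> Rp) \/ yle z r).

Lemma next_row_matP r Rp : next_row r Rp <-> forall z, next_row_mat r Rp z.
Proof.
split=> [[row_Rp [nle below_r]] z|all_z].
  by do 2!split=> //; apply/or_notP => -[row_z [le_z ne_z]]; apply: below_r.
have [row_Rp [nle _]] := all_z Rp; split=> //; split=> // z row_z le_z ne_z.
by have [_ [_ /or_notP]] := all_z z; apply.
Qed.

Definition box_rect_qf lo hi row K z1 z2 z3 : qf :=
  QAnd (Lt lo hi) (QAnd (QNot (QAnd (Lt lo z1) (Lt z1 hi)))
  (QAnd (Le K hi) (QAnd (QNot (Le K lo))
  (QAnd (Imp (QAnd (Le z2 hi) (QNot (Le z2 lo))) (Le K z2))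
  (QAnd (Le row K) (Imp (QAnd (Row z3) (Le z3 K)) (Le z3 row))))))).

Definition box_rect_mat lo hi row K z1 z2 z3 : Prop :=
  ylt lo hi /\ ~ (ylt lo z1 /\ ylt z1 hi) /\ yle K hi /\ ~ yle K lo /\
  (~ (yle z2 hi /\ ~ yle z2 lo) \/ yle K z2) /\ yle row K /\
  (~ (is_row z3 /\ yle z3 K) \/ yle z3 row).

Lemma box_rect_matP lo hi row K :
  box_rect lo hi row K <-> forall z1 z2 z3, box_rect_mat lo hi row K z1 z2 z3.
Proof.
split=> [[[lt_lh no_mid] [[le_Kh [nle_Kl min_K]] [le_rK below_r]]] z1 z2 z3|all_z].
  split=> //; split; first exact: no_mid.
  split=> //; split=> //; split; first by apply/or_notP => -[]; apply: min_K.
  by split=> //; apply/or_notP => -[]; apply: below_r.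
have [lt_lh [_ [le_Kh [nle_Kl [_ [le_rK _]]]]]] := all_z hi hi hi.
split; first by split=> // z1; case: (all_z z1 hi hi) => _ [].
split.
  split=> //; split=> // z2 le_z nle_z.
  by have [_ [_ [_ [_ [/or_notP min_K _]]]]] := all_z hi z2 hi; apply: min_K.
split=> // z3 row_z le_z.
by have [_ [_ [_ [_ [_ [_ /or_notP below_r]]]]]] := all_z hi hi z3; apply: below_r.
Qed.

Definition Iff f g : qf := QAnd (Imp f g) (Imp g f).

Lemma iff_orP (A B : Prop) : (~ A \/ B) /\ (~ B \/ A) <-> (A <-> B).
Proof. by rewrite !or_notP. Qed.

Definition not_col_mat z w : Prop := is_row w /\ yle w z /\ ~ yle w part11.

Lemma not_colP z : ~ is_col z <-> exists w, not_col_mat z w.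
Proof.
split=> [ncol_z|[w [row_w [le_wz nle_w]]] col_z]; last exact/nle_w/col_z.
apply: NNPP => no_w; apply: ncol_z => w row_w le_wz.
by apply: NNPP => nle_w; apply: no_w; exists w.
Qed.

Definition column_below_qf CA K w z w' : qf :=
  QAnd (Imp (QAnd (Row w) (Le w CA)) (Below11 w))
  (QAnd (Le CA K) (QOr (NotCol z w') (Imp (Le z K) (Le z CA)))).

Definition column_below_mat CA K w z w' : Prop :=
  (~ (is_row w /\ yle w CA) \/ yle w part11) /\ yle CA K /\
  (not_col_mat z w' \/ ~ yle z K \/ yle z CA).

Lemma column_below_matP CA K :
  column_below CA K <-> forall w z, exists w', column_below_mat CA K w z w'.
Proof.
split=> [[col_CA [le_CA max_CA]] w z|all_z].
  have col_w : ~ (is_row w /\ yle w CA) \/ yle w part11.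
    by apply/or_notP => -[]; apply: col_CA.
  have [col_z|/not_colP [w' ncol_z]] := classic (is_col z).
    by exists z; do 2!split=> //; right; apply/or_notP; apply: max_CA.
  by exists w'; do 2!split=> //; left.
have [_ [_ [le_CA _]]] := all_z CA CA.
split=> [w row_w le_w|]; first by have [_ [/or_notP col_w _]] := all_z w CA; apply: col_w.
split=> // z col_z le_z; have [w' [_ [_ [ncol_z|/or_notP max_z]]]] := all_z CA z.
  by case: (proj2 (not_colP z) (ex_intro _ _ ncol_z) col_z).
exact: max_z.
Qed.

Definition rect_of_height_qf s KB RB w z u v w' t : qf :=
  QAnd (Le s RB) (QAnd (Imp (QAnd (Row w) (Le w RB)) (Le w s))
  (QAnd (QOr (NotCol z w') (Iff (Le z RB) (Le z KB)))
  (Imp (QAnd (Lt u RB) (Lt v RB)) (QAnd (Le u t) (QAnd (Le v t) (Lt t RB)))))).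

Definition rect_of_height_mat s KB RB w z u v w' t : Prop :=
  yle s RB /\ (~ (is_row w /\ yle w RB) \/ yle w s) /\
  (not_col_mat z w' \/ ((~ yle z RB \/ yle z KB) /\ (~ yle z KB \/ yle z RB))) /\
  (~ (ylt u RB /\ ylt v RB) \/ (yle u t /\ yle v t /\ ylt t RB)).

Lemma rect_of_height_matP s KB RB : rect_of_height s KB RB <->
  forall w z u v, exists w' t, rect_of_height_mat s KB RB w z u v w' t.
Proof.
split=> [[[le_s first_s] same_cols JI_RB] w z u v|all_z].
  have row_w : ~ (is_row w /\ yle w RB) \/ yle w s.
    by apply/or_notP => -[]; apply: first_s.
  have [t JI_uv] : exists t, ~ (ylt u RB /\ ylt v RB) \/ (yle u t /\ yle v t /\ ylt t RB).
    have [[lt_u lt_v]|nlt] := classic (ylt u RB /\ ylt v RB); last by exists u; left.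
    by have [t [? ? ?]] := JI_RB _ _ lt_u lt_v; exists t; right.
  have [col_z|/not_colP [w' ncol_z]] := classic (is_col z).
    by exists z, t; do 2!split=> //; split=> //; right; apply/iff_orP/same_cols.
  by exists w', t; do 2!split=> //; split=> //; left.
have [_ [_ [le_s _]]] := all_z RB RB RB RB.
split; first split=> // w row_w le_w.
- by have [_ [_ [_ [/or_notP first_w _]]]] := all_z w RB RB RB; apply: first_w.
- move=> z col_z; have [w' [_ [_ [_ [[ncol_z|/iff_orP //] _]]]]] := all_z RB z RB RB.
  by case: (proj2 (not_colP z) (ex_intro _ _ ncol_z) col_z).
- move=> u v lt_u lt_v; have [_ [t [_ [_ [_ /or_notP JI_uv]]]]] := all_z RB RB u v.
  by have [? [? ?]] := JI_uv (conj lt_u lt_v); exists t.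
Qed.

Definition staircase_qf x y w s s' v : qf :=
  Imp (QAnd (Lt w y) (QAnd (QNot (QAnd (Lt w s) (Lt s y)))
        (QAnd (Lt y x) (QNot (QAnd (Lt y s') (Lt s' x))))))
      (QAnd (Le w v) (QAnd (Le v x) (QAnd (QNot (QEq (TVar v) (TVar w)))
        (QAnd (QNot (QEq (TVar v) (TVar x))) (QNot (QEq (TVar v) (TVar y))))))).

Definition staircase_mat x y w s s' v : Prop :=
  ~ (ylt w y /\ ~ (ylt w s /\ ylt s y) /\ ylt y x /\ ~ (ylt y s' /\ ylt s' x)) \/
  (yle w v /\ yle v x /\ v <> w /\ v <> x /\ v <> y).

Lemma staircase_matP x :
  staircase x <-> forall y w, exists s s' v, staircase_mat x y w s s' v.
Proof.
split=> [stair_x y w|all_z y w [lt_wy no_wy] [lt_yx no_yx]].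
  have [[cov_wy cov_yx]|ncov] := classic (ycov w y /\ ycov y x).
    have [v [? ? [? ? ?]]] := stair_x _ _ cov_wy cov_yx.
    by exists y, y, v; right.
  have [[s1 between1]|no1] := classic (exists s, ylt w s /\ ylt s y).
    by exists s1, y, y; left => -[_ []].
  have [[s2 between2]|no2] := classic (exists s, ylt y s /\ ylt s x).
    by exists y, s2, y; left => -[_ [_ [_ []]]].
  exists y, y, y; left => -[lt_wy [_ [lt_yx _]]]; apply: ncov.
  by split; split=> // s ?; [apply: no1 | apply: no2]; exists s.
have [s [s' [v [nchain|[? [? [? [? ?]]]]]]]] := all_z y w; last by exists v.
by case: nchain; split; last split; [exact: lt_wy | exact: no_wy | split].
Qed.

(* Variables 0, 1, 2 are rho, sigma, pi, and the three
   quantifier blocks are those of formula_prop below: the outer universal block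
   3..10 is Rp d KA c KB CA RB x; the existential block 11..28 collects the
   universal variables of the hypotheses next_row (z0), box_rect (z1 z2 z3 and
   z4 z5 z6), the outer variables of column_below (w1 z7), rect_of_height
   (w3 z8 u v) and staircase (y w), and the witnesses a d' KA' of the side
   condition; the inner universal block 29..37 collects the existential
   variables w2, w4 t, s1 s2 v' of those hypotheses and the variables
   z1' z2' z3' of the side condition. *)
Definition matrix : qf :=
  QAnd
    (QOr (QNot (next_row_qf 0 3 11))
    (QOr (QNot (box_rect_qf 4 2 0 5 12 13 14))
    (QOr (QNot (box_rect_qf 2 6 3 7 15 16 17))
    (QOr (QNot (column_below_qf 8 5 18 19 29))
    (QOr (QNot (rect_of_height_qf 1 7 9 20 21 22 23 30 31))
    (QOr (QNot (staircase_qf 10 24 25 32 33 34))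
         (Iff (Le 8 10) (Le 9 10))))))))
    (QAnd (Row 1) (QAnd (Row 0) (QAnd (QNot (Le 1 26)) (box_rect_qf 27 2 0 28 35 36 37)))).

Definition blocks : seq (seq nat) :=
  [:: [:: 3; 4; 5; 6; 7; 8; 9; 10];
      [:: 11; 12; 13; 14; 15; 16; 17; 18; 19; 20; 21; 22; 23; 24; 25; 26; 27; 28];
      [:: 29; 30; 31; 32; 33; 34; 35; 36; 37]].

Definition formula_prop (r s pi : partition) : Prop :=
  forall Rp d KA c KB CA RB x : partition,
  exists z0 z1 z2 z3 z4 z5 z6 w1 z7 w3 z8 u v y w a d' KA' : partition,
  forall w2 w4 t s1 s2 v' z1' z2' z3' : partition,
  (~ next_row_mat r Rp z0 \/ ~ box_rect_mat d pi r KA z1 z2 z3 \/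
   ~ box_rect_mat pi c Rp KB z4 z5 z6 \/ ~ column_below_mat CA KA w1 z7 w2 \/
   ~ rect_of_height_mat s KB RB w3 z8 u v w4 t \/ ~ staircase_mat x y w s1 s2 v' \/
   ((~ yle CA x \/ yle RB x) /\ (~ yle RB x \/ yle CA x))) /\
  (is_row s /\ is_row r /\ ~ yle s a /\ box_rect_mat d' pi r KA' z1' z2' z3').

Lemma prenex_satE e :
  prenex_sat true blocks matrix e <-> formula_prop (e 0) (e 1) (e 2).
Proof. exact: iff_refl. Qed.

(* Classically, if a universal statement implies P, some instance either fails
   or P holds.  This is how the hypotheses of the formula are pulled into the
   existential block. *)
Section Witnesses.
Variables (T : Type) (t0 : T) (P : Prop).

Lemma witness1 (Q : T -> Prop) : ((forall a, Q a) -> P) -> exists a, P \/ ~ Q a.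
Proof.
move=> QP; have [p|np] := classic P; first by exists t0; left.
by have [a nQa] := not_all_ex_not _ _ (fun allQ => np (QP allQ)); exists a; right.
Qed.

Lemma witness2 (Q : T -> T -> Prop) :
  ((forall a b, Q a b) -> P) -> exists a b, P \/ ~ Q a b.
Proof.
move=> /witness1 [a Pa]; have [b Pb] : exists b, P \/ ~ Q a b.
  by apply: witness1; case: Pa => // nQ /nQ.
by exists a, b.
Qed.

Lemma witness3 (Q : T -> T -> T -> Prop) :
  ((forall a b c, Q a b c) -> P) -> exists a b c, P \/ ~ Q a b c.
Proof.
move=> /witness2 [a [b Pab]]; have [c Pc] : exists c, P \/ ~ Q a b c.
  by apply: witness1; case: Pab => // nQ /nQ.
by exists a, b, c.
Qed.

Lemma witness4 (Q : T -> T -> T -> T -> Prop) :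
  ((forall a b c d, Q a b c d) -> P) -> exists a b c d, P \/ ~ Q a b c d.
Proof.
move=> /witness3 [a [b [c Pabc]]]; have [d Pd] : exists d, P \/ ~ Q a b c d.
  by apply: witness1; case: Pabc => // nQ /nQ.
by exists a, b, c, d.
Qed.

End Witnesses.

Lemma shape_condition_of_formula r s pi : formula_prop r s pi -> shape_condition r s pi.
Proof.
move=> F; split=> [Rp d KA c KB CA RB x nr lb ub cb rh sc|].
  have [z0 [z1 [z2 [z3 [z4 [z5 [z6 [w1 [z7 [w3 [z8 [u [v [y [w M]]]]]]]]]]]]]]] :=
    F Rp d KA c KB CA RB x.
  have [w2 mcb] := proj1 (column_below_matP _ _) cb w1 z7.
  have [w4 [t mrh]] := proj1 (rect_of_height_matP _ _ _) rh w3 z8 u v.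
  have [s1 [s2 [v' msc]]] := proj1 (staircase_matP _) sc y w.
  have [a [d' [KA' M_all]]] := M.
  move: (M_all w2 w4 t s1 s2 v' part11 part11 part11) => [+ _].
  move=> /or_notP/(_ (proj1 (next_row_matP _ _) nr z0)).
  move=> /or_notP/(_ (proj1 (box_rect_matP _ _ _ _) lb z1 z2 z3)).
  move=> /or_notP/(_ (proj1 (box_rect_matP _ _ _ _) ub z4 z5 z6)).
  by move=> /or_notP/(_ mcb)/or_notP/(_ mrh)/or_notP/(_ msc)/iff_orP.
have [? [? [? [? [? [? [? [? [? [? [? [? [? [? [? [a [d' [KA' M]]]]]]]]]]]]]]]]]] :=
  F part11 part11 part11 part11 part11 part11 part11 part11.
have [_ [row_s [row_r [nle_sa _]]]] :=
  M part11 part11 part11 part11 part11 part11 part11 part11 part11.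
do 2!split=> //; split; first by exists a.
exists d', KA'; apply/box_rect_matP => z1' z2' z3'.
by have [_ [_ [_ [_ ?]]]] := M part11 part11 part11 part11 part11 part11 z1' z2' z3'.
Qed.

Lemma formula_of_shape_condition r s pi : shape_condition r s pi -> formula_prop r s pi.
Proof.
case=> same_stairs [row_s [row_r [[a nle_sa] [d0 [KA0 lb0]]]]] Rp d KA c KB CA RB x.
have [z0 Wnr] := witness1 part11 (proj2 (next_row_matP r Rp)).
have [z1 [z2 [z3 Wlb]]] := witness3 part11 (proj2 (box_rect_matP d pi r KA)).
have [z4 [z5 [z6 Wub]]] := witness3 part11 (proj2 (box_rect_matP pi c Rp KB)).
have [w1 [z7 Wcb]] := witness2 part11 (proj2 (column_below_matP CA KA)).
have [w3 [z8 [u [v Wrh]]]] := witness4 part11 (proj2 (rect_of_height_matP s KB RB)).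
have [y [w Wsc]] := witness2 part11 (proj2 (staircase_matP x)).
exists z0, z1, z2, z3, z4, z5, z6, w1, z7, w3, z8, u, v, y, w, a, d0, KA0.
move=> w2 w4 t s1 s2 v' z1' z2' z3'; split; last first.
  by do 3!split=> //; apply: (proj1 (box_rect_matP _ _ _ _) lb0).
case: Wnr => [nr|nnr]; last by left.
case: Wlb => [lb|nlb]; last by right; left.
case: Wub => [ub|nub]; last by do 2!right; left.
case: Wcb => [cb|ncb]; last by do 3!right; left => mcb; apply: ncb; exists w2.
case: Wrh => [rh|nrh]; last by do 4!right; left => mrh; apply: nrh; exists w4, t.
case: Wsc => [sc|nsc]; last by do 5!right; left => msc; apply: nsc; exists s1, s2, v'.
by do 6!right; apply/iff_orP; apply: same_stairs nr lb ub cb rh sc.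
Qed.

Theorem proposition3p11 : Pi_definable3 3 rel_3_11.
Proof.
exists blocks, matrix; split=> // e.
rewrite prenex_satE rel_3_11P.
by split; [exact: formula_of_shape_condition | exact: shape_condition_of_formula].
Qed.
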